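(* Let $S$ be a finite set of odd primes and let $R_S$ be as in the context. For $\gamma\in\overline{\Gamma}_S$ one has $\gamma R_S\cap R_S\neq\emptyset$ if and only if $\gamma=\overline{x}$ for some $x\in\mathcal{O}$ with $\mathrm{Nm}(x)$ dividing $m_S$ (here $\overline{x}$ is the image of $x$ in $\overline{\Gamma}_S$).
   Context: Let $\mathcal{H}$ be the quaternion algebra over $\mathbb{Q}$ with basis $1, I, J, IJ$ and relations $I^2=J^2=-1$, $IJ=-JI$, with reduced norm $\mathrm{Nm}(a+bI+cJ+dIJ)=a^2+b^2+c^2+d^2$. Let $\mathcal{O}$ be the Hurwitz order, the $\mathbb{Z}$-span of $1, I, J, \tfrac12(1+I+J+IJ)$. For a finite set $S$ of primes, let $\mathbb{Z}_S=\mathbb{Z}[1/p : p\in S]$, $m_S=\prod_{p\in S}p$, $\mathcal{O}_S=\mathcal{O}\otimes_{\mathbb{Z}}\mathbb{Z}_S$, $\Gamma_S=\mathcal{O}_S^*$, and $\overline{\Gamma}_S=\Gamma_S/\mathbb{Z}_S^*$. For each odd prime $p$ fix an isomorphism $\mathcal{H}\otimes_{\mathbb{Q}}\mathbb{Q}_p\cong \mathrm{M}_2(\mathbb{Q}_p)$ carrying $\mathcal{O}\otimes_{\mathbb{Z}}\mathbb{Z}_p$ onto $\mathrm{M}_2(\mathbb{Z}_p)$; let $\mathfrak{X}_p$ be the Bruhat–Tits tree of $\mathrm{PGL}_2(\mathbb{Q}_p)$ (vertices are homothety classes of $\mathbb{Z}_p$-lattices in $\mathbb{Q}_p^2$, two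 classes adjacent when representatives $L'\subset L$ satisfy $L/L'\cong \mathbb{Z}/p$), viewed as a metric tree with edges of length $1$, on which $\overline{\Gamma}_S$ acts through $\mathcal{H}^*\subset \mathrm{GL}_2(\mathbb{Q}_p)$, and let $v_{0,p}$ be the class of $\mathbb{Z}_p\oplus\mathbb{Z}_p$. $\mathfrak{X}_S=\prod_{p\in S}\mathfrak{X}_p$ with the diagonal action. $R_p$ is the set of points of $\mathfrak{X}_p$ at distance $<2/3$ from $v_{0,p}$ and $R_S=\prod_{p\in S}R_p$. *)

From HB Require Import structures.
From mathcomp Require Import all_boot all_order all_algebra.
Set Implicit Arguments. Unset Strict Implicit. Unset Printing Implicit Defensive.
Import Order.TTheory GRing.Theory Num.Theory.
Local Open Scope ring_scope.

(* Quat a b c d  represents  a + b I + c J + d IJ. *)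
Record quat := Quat { qa : rat; qb : rat; qc : rat; qd : rat }.

Definition q1 : quat := Quat 1 0 0 0.
Definition q0 : quat := Quat 0 0 0 0.

(* Multiplication with I^2 = J^2 = -1, IJ = -JI (so (IJ)^2 = -1, J(IJ) = I, (IJ)I = J). *)
Definition qmul (x y : quat) : quat := Quat
  (qa x * qa y - qb x * qb y - qc x * qc y - qd x * qd y)
  (qa x * qb y + qb x * qa y + qc x * qd y - qd x * qc y)
  (qa x * qc y - qb x * qd y + qc x * qa y + qd x * qb y)
  (qa x * qd y + qb x * qc y - qc x * qb y + qd x * qa y).

Definition qscale (c : rat) (x : quat) : quat :=
  Quat (c * qa x) (c * qb x) (c * qc x) (c * qd x).

Definition qconj (x : quat) : quat := Quat (qa x) (- qb x) (- qc x) (- qd x).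

Definition Nm (x : quat) : rat := qa x ^+ 2 + qb x ^+ 2 + qc x ^+ 2 + qd x ^+ 2.

Definition qinv (x : quat) : quat := qscale (Nm x)^-1 (qconj x).

(* ---------- Hurwitz order: Z-span of 1, I, J, (1+I+J+IJ)/2 ---------- *)
Definition inO (x : quat) : Prop :=
  exists a b c d : int,
    x = Quat (a%:~R + d%:~R / 2) (b%:~R + d%:~R / 2) (c%:~R + d%:~R / 2) (d%:~R / 2).

Definition mS (S : seq nat) : nat := (\prod_(p <- S) p)%N.

Definition isInt (q : rat) : bool := denq q == 1.

Definition inZS (S : seq nat) (q : rat) : Prop :=
  exists k : nat, isInt (((mS S) ^ k)%:R * q).

Definition unitZS (S : seq nat) (u : rat) : Prop :=
  u != 0 /\ inZS S u /\ inZS S u^-1.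

Definition inOS (S : seq nat) (x : quat) : Prop :=
  exists k : nat, inO (qscale (((mS S) ^ k)%:R) x).

Definition inGammaS (S : seq nat) (x : quat) : Prop :=
  x <> q0 /\ inOS S x /\ inOS S (qinv x).

Definition inOloc (p : nat) (x : quat) : Prop :=
  exists n : nat, (0 < n)%N /\ coprime n p /\ inO (qscale n%:R x).

Definition punit (p : nat) (q : rat) : bool :=
  [&& q != 0, ~~ (p%:Z %| numq q)%Z & ~~ (p%:Z %| denq q)%Z].

(* Vertices of X_p are represented by g in H^*: g stands for the homothety class of
   the right O_(p)-lattice g O_(p) (this corresponds, via H (x) Q_p = M_2(Q_p),
   O (x) Z_p = M_2(Z_p), to the lattice class [g Z_p^2]).  The base vertex v_{0,p}
   is represented by 1. *)
Definition sameV (p : nat) (g h : quat) : Prop :=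
  exists c : rat, c != 0 /\
    (let y := qscale c (qmul (qinv g) h) in inOloc p y /\ punit p (Nm y)).

(* adjacency: after rescaling, h O_(p) is a sublattice of g O_(p) with simple
   quotient, i.e. c g^-1 h in O_(p) with reduced norm of p-adic valuation 1. *)
Definition adjV (p : nat) (g h : quat) : Prop :=
  exists c : rat, c != 0 /\
    (let y := qscale c (qmul (qinv g) h) in inOloc p y /\ punit p (Nm y / p%:R)).

Fixpoint walk (p : nat) (n : nat) (g h : quat) : Prop :=
  match n with
  | 0 => sameV p g h
  | n'.+1 => exists k : quat, adjV p g k /\ walk p n' k h
  end.

Definition distV (p : nat) (g : quat) (n : nat) : Prop :=
  walk p n q1 g /\ forall k : nat, (k < n)%N -> ~ walk p k q1 g.

(* Points of the metric tree: a point on the edge [src, tgt] at distance par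
   from src (0 <= par <= 1).  Every point of X_p has such a description. *)
Record tpoint (R : realFieldType) := TPoint { pt_src : quat; pt_tgt : quat; pt_par : R }.

Definition onTree (R : realFieldType) (p : nat) (P : tpoint R) : Prop :=
  adjV p (pt_src P) (pt_tgt P) /\ 0 <= pt_par P <= 1.

(* P in R_p : metric distance from v_{0,p} is < 2/3.  In a tree, the distance from
   v_0 to the point at parameter t on the edge [g,h] is min(d(g)+t, d(h)+1-t). *)
Definition inRp (R : realFieldType) (p : nat) (P : tpoint R) : Prop :=
  exists n m : nat, distV p (pt_src P) n /\ distV p (pt_tgt P) m /\
    (n%:R + pt_par P < 2%:R / 3%:R \/ m%:R + 1 - pt_par P < 2%:R / 3%:R).

Definition act (R : realFieldType) (g : quat) (P : tpoint R) : tpoint R :=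
  TPoint (qmul g (pt_src P)) (qmul g (pt_tgt P)) (pt_par P).

(* A point of R_p lies on an
   edge with endpoint v_{0,p}, so if gamma R_S meets R_S then gamma moves every v_{0,p}
   by at most one edge: some rational multiple of gamma lies in O_(p) and has reduced
   norm of p-adic valuation 0 or 1.  Write gamma = lambda x with lambda in Z_S^* and
   x in O; whenever p^2 divides Nm x for some p in S, this local condition forces x/p
   to lie in O, and dividing out such factors ends with Nm x dividing m_S.
   Conversely, for such x, gamma fixes v_{0,p} when p does not divide Nm x; otherwise
   x conj(x) = Nm x shows that gamma maps the edge from v_{0,p} to conj(x) v_{0,p} onto
   an edge ending at v_{0,p}, so the midpoint of that edge works. *)

From HB Require Import structures.
From mathcomp Require Import all_boot all_order all_algebra.
From mathcomp Require Import ring lra zify.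
Import Order.TTheory GRing.Theory Num.Theory.
Local Open Scope ring_scope.
Set Implicit Arguments. Unset Strict Implicit.

Ltac quat_unfold := repeat match goal with x : quat |- _ => destruct x end;
  rewrite /qmul /qscale /qconj /qinv /Nm /q1 /q0 /=.

Lemma qmulA x y z : qmul x (qmul y z) = qmul (qmul x y) z.
Proof. quat_unfold; f_equal; ring. Qed.
Lemma qmul1q x : qmul q1 x = x.
Proof. quat_unfold; f_equal; ring. Qed.
Lemma qmulq1 x : qmul x q1 = x.
Proof. quat_unfold; f_equal; ring. Qed.
Lemma qscale1 x : qscale 1 x = x.
Proof. quat_unfold; f_equal; ring. Qed.
Lemma qscaleA c d x : qscale c (qscale d x) = qscale (c * d) x.
Proof. quat_unfold; f_equal; ring. Qed.
Lemma qmulZl c x y : qmul (qscale c x) y = qscale c (qmul x y).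
Proof. quat_unfold; f_equal; ring. Qed.
Lemma qmulZr c x y : qmul x (qscale c y) = qscale c (qmul x y).
Proof. quat_unfold; f_equal; ring. Qed.
Lemma qconjZ c x : qconj (qscale c x) = qscale c (qconj x).
Proof. quat_unfold; f_equal; ring. Qed.
Lemma qmul_conj x : qmul x (qconj x) = qscale (Nm x) q1.
Proof. quat_unfold; f_equal; ring. Qed.
Lemma qinv1 : qinv q1 = q1.
Proof. rewrite /qinv /qscale /qconj /Nm /q1 /=; f_equal; field. Qed.
Lemma qinvK x : Nm x != 0 -> qmul (qinv x) x = q1.
Proof. quat_unfold => x0; f_equal; field; exact: x0. Qed.
Lemma qmulV x : Nm x != 0 -> qmul x (qinv x) = q1.
Proof. quat_unfold => x0; f_equal; field; exact: x0. Qed.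

Lemma Nm1 : Nm q1 = 1.
Proof. by rewrite /Nm /q1 /=; ring. Qed.
Lemma NmM x y : Nm (qmul x y) = Nm x * Nm y.
Proof. quat_unfold; ring. Qed.
Lemma NmZ c x : Nm (qscale c x) = c ^+ 2 * Nm x.
Proof. quat_unfold; ring. Qed.
Lemma Nm_conj x : Nm (qconj x) = Nm x.
Proof. quat_unfold; ring. Qed.
Lemma Nm_ge0 x : 0 <= Nm x.
Proof. quat_unfold; by rewrite !addr_ge0 // sqr_ge0. Qed.

Lemma Nm_eq0 x : Nm x = 0 -> x = q0.
Proof.
case: x => a b c d; rewrite /Nm /q0 /= -!addrA => /eqP.
rewrite !paddr_eq0 ?addr_ge0 ?sqr_ge0 // !sqrf_eq0.
by case/and4P => /eqP-> /eqP-> /eqP-> /eqP->.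
Qed.

Lemma Nm_inv x : Nm (qinv x) = (Nm x)^-1.
Proof.
rewrite /qinv NmZ Nm_conj; have [->|x0] := eqVneq (Nm x) 0; first by rewrite invr0 mulr0.
by rewrite exprVn expr2 invfM -mulrA mulVf // mulr1.
Qed.

Lemma NmZ_neq0 c y : c != 0 -> Nm y != 0 -> Nm (qscale c y) != 0.
Proof. by move=> c0 y0; rewrite NmZ mulf_neq0 // expf_neq0. Qed.

Lemma inO_mul x y : inO x -> inO y -> inO (qmul x y).
Proof.
move=> [a [b [c [d ->]]]] [e [f [g [h ->]]]].
exists (- d*h - d*g - c*g + c*f - b*h - b*g - b*f + a*e).
exists (- d*g + d*f + c*h + c*f - b*g + b*e + a*f).
exists (d*f + c*h + c*f + c*e - b*h - b*g + a*g).
exists (d*h + d*g - d*f + d*e - c*h - c*f - c*f + b*h + b*g + b*g + a*h).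
by rewrite /qmul /=; f_equal; field.
Qed.

Lemma inO_conj x : inO x -> inO (qconj x).
Proof.
move=> [a [b [c [d ->]]]]; exists (a + d), (- b), (- c), (- d).
by rewrite /qconj /=; f_equal; field.
Qed.

Lemma inO_scale (z : int) x : inO x -> inO (qscale z%:~R x).
Proof.
move=> [a [b [c [d ->]]]]; exists (z * a), (z * b), (z * c), (z * d).
by rewrite /qscale /=; f_equal; field.
Qed.

Lemma inO_q1 : inO q1.
Proof. by exists 1, 0, 0, 0; rewrite /q1; f_equal; field. Qed.

Lemma inO_Nm x : inO x -> exists n : nat, Nm x = n%:R.
Proof.
move=> hx; have := Nm_ge0 x; case: hx => [a [b [c [d ->]]]].
set z : int := a*a + b*b + c*c + a*d + b*d + c*d + d*d.
have -> : Nm (Quat (a%:~R + d%:~R / 2) (b%:~R + d%:~R / 2) (c%:~R + d%:~R / 2) (d%:~R / 2))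
    = z%:~R by rewrite /Nm /z /=; field.
by rewrite ler0z => z0; exists `|z|%N; rewrite -[z in LHS]gez0_abs.
Qed.

(* Coordinates in the Z-basis 1, I, J, (1+I+J+IJ)/2 of the Hurwitz order. *)
Definition hurwitz_coords (x : quat) : seq rat :=
  [:: qa x - qd x; qb x - qd x; qc x - qd x; 2 * qd x].

Lemma inOP x : inO x <-> all (fun r : rat => r \is a Num.int) (hurwitz_coords x).
Proof.
split=> [[a [b [c [d ->]]]]|].
  rewrite /= -!addrA subrr !addr0 mulrC divfK ?pnatr_eq0 //.
  by rewrite !intr_int.
case: x => xa xb xc xd /and5P[/intrP[a ea] /intrP[b eb] /intrP[c ec] /intrP[d ed] _].
by exists a, b, c, d; move: ea eb ec ed => /= <- <- <- <-; f_equal; field.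
Qed.

Lemma hurwitz_coordsZ c x :
  hurwitz_coords (qscale c x) = map ( *%R c) (hurwitz_coords x).
Proof. by rewrite /hurwitz_coords /=; congr [:: _; _; _; _]; ring. Qed.

Lemma Qint_div_prime (p n : nat) (w : rat) : prime p -> coprime n p ->
  w \is a Num.int -> n%:R * (p%:R^-1 * w) \is a Num.int -> p%:R^-1 * w \is a Num.int.
Proof.
move=> pp cnp /intrP[z ->] /intrP[k ek].
have p0 : (p%:R : rat) != 0 by rewrite pnatr_eq0 -lt0n prime_gt0.
have /intr_inj e : ((n%:Z * z)%:~R : rat) = (p%:Z * k)%:~R.
  by rewrite !intrM -ek /=; field.
have : (p%:Z %| n%:Z * z)%Z by rewrite e dvdz_mulr.
rewrite Gauss_dvdzr ?coprimezE 1?coprime_sym // => /Qint_dvdz.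
by rewrite mulrC.
Qed.

(** * The p-adic valuation and the local order O_(p) *)

Section Valuation.
Variable p : nat.
Hypothesis pp : prime p.

Definition vp (q : rat) : int := (logn p `|numq q|)%:Z - (logn p `|denq q|)%:Z.

Lemma logn_ndvd m : ~~ (p %| m)%N -> logn p m = 0%N.
Proof. by move=> h; apply: logn_coprime; rewrite prime_coprime. Qed.

Lemma logn_dvd_gt0 m : (0 < m)%N -> (p %| m)%N -> (0 < logn p m)%N.
Proof. by move=> m0 h; rewrite logn_gt0 mem_primes pp m0 h. Qed.

Lemma vp_frac (n d : int) : n != 0 -> d != 0 ->
  vp (n%:~R / d%:~R) = (logn p `|n|)%:Z - (logn p `|d|)%:Z.
Proof.
move=> n0 d0; set x : rat := _ / _.
have x0 : x != 0 by rewrite mulf_neq0 ?invr_eq0 ?intr_eq0.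
have e : numq x * d = n * denq x.
  by apply: (@intr_inj rat); rewrite !intrM numqE /x; field; rewrite intr_eq0.
have e2 : (`|numq x| * `|d| = `|n| * `|denq x|)%N by rewrite -!abszM e.
have hn : (0 < `|numq x|)%N by rewrite absz_gt0 numq_eq0.
have hd : (0 < `|denq x|)%N by rewrite absz_gt0 gt_eqF ?denq_gt0.
have hn' : (0 < `|n|)%N by rewrite absz_gt0.
have hd' : (0 < `|d|)%N by rewrite absz_gt0.
by have := congr1 (logn p) e2; rewrite !lognM // /vp; lia.
Qed.

Lemma vp0 : vp 0 = 0.
Proof. by rewrite /vp /= logn0 logn1. Qed.

Lemma vpM q r : q != 0 -> r != 0 -> vp (q * r) = vp q + vp r.
Proof.
move=> q0 r0; have nq : numq q != 0 by rewrite numq_eq0.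
have nr : numq r != 0 by rewrite numq_eq0.
have dq : denq q != 0 by rewrite gt_eqF ?denq_gt0.
have dr : denq r != 0 by rewrite gt_eqF ?denq_gt0.
have -> : q * r = (numq q * numq r)%:~R / (denq q * denq r)%:~R.
  have ratE (s : rat) : s = (numq s)%:~R / (denq s)%:~R by rewrite divq_num_den.
  by rewrite [q in LHS]ratE [r in LHS]ratE !intrM; field; rewrite !intr_eq0 dq dr.
rewrite vp_frac ?mulf_neq0 // !abszM !lognM ?absz_gt0 // /vp; lia.
Qed.

Lemma vpV q : vp q^-1 = - vp q.
Proof.
have [->|q0] := eqVneq q 0; first by rewrite invr0 vp0.
have -> : q^-1 = (denq q)%:~R / (numq q)%:~R by rewrite -{1}(divq_num_den q) invf_div.
rewrite vp_frac; [by rewrite /vp; lia | by rewrite gt_eqF ?denq_gt0 | by rewrite numq_eq0].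
Qed.

Lemma vp_nat n : (0 < n)%N -> vp n%:R = logn p n.
Proof.
move=> n0; have -> : (n%:R : rat) = (n%:Z)%:~R / (1%:Z)%:~R by rewrite divr1.
by rewrite vp_frac ?logn1 ?subr0 // -lt0n.
Qed.

Lemma vp_invp : vp p%:R^-1 = -1.
Proof. by rewrite vpV vp_nat ?prime_gt0 // logn_prime // eqxx. Qed.

Lemma not_dvdn_numq_denq q : ~~ ((p %| `|numq q|)%N && (p %| `|denq q|)%N).
Proof.
apply/negP => /andP[h1 h2].
have : (p %| gcdn `|numq q| `|denq q|)%N by rewrite dvdn_gcd h1.
by rewrite (eqP (coprime_num_den q)) dvdn1 => /eqP p1; move: pp; rewrite p1.
Qed.

Lemma punitP q : punit p q <-> q != 0 /\ vp q = 0.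
Proof.
rewrite /punit !dvdzE /=; split.
  by case/and3P=> q0 h1 h2; rewrite /vp !logn_ndvd.
case=> q0 hv; rewrite q0 /=.
have hn : (0 < `|numq q|)%N by rewrite absz_gt0 numq_eq0.
have hd : (0 < `|denq q|)%N by rewrite absz_gt0 gt_eqF ?denq_gt0.
have := not_dvdn_numq_denq q.
case: (boolP (p %| `|numq q|)%N) => h1; case: (boolP (p %| `|denq q|)%N) => h2 //=.
- by move: hv; rewrite /vp (logn_ndvd h2); have := logn_dvd_gt0 hn h1; lia.
- by move: hv; rewrite /vp (logn_ndvd h1); have := logn_dvd_gt0 hd h2; lia.
Qed.

Lemma vp_ge0_denq q : q != 0 -> 0 <= vp q -> ~~ (p %| `|denq q|)%N.
Proof.
move=> q0 hv; apply/negP => h2; have := not_dvdn_numq_denq q.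
case: (boolP (p %| `|numq q|)%N) => h1; rewrite ?h2 //= => _.
have hd : (0 < `|denq q|)%N by rewrite absz_gt0 gt_eqF ?denq_gt0.
by move: hv; rewrite /vp (logn_ndvd h1); have := logn_dvd_gt0 hd h2; lia.
Qed.

Lemma punit_neq0 q : punit p q -> q != 0.
Proof. by case/and3P. Qed.

Lemma punitM q r : punit p q -> punit p r -> punit p (q * r).
Proof.
move=> /punitP[q0 hq] /punitP[r0 hr]; apply/punitP.
by rewrite mulf_neq0 // vpM // hq hr.
Qed.

Lemma punit1 : punit p 1.
Proof. by apply/punitP; rewrite /vp /= !logn1. Qed.

Lemma punit_nat n : (0 < n)%N -> ~~ (p %| n)%N -> punit p n%:R.
Proof. by move=> n0 hn; apply/punitP; rewrite pnatr_eq0 -lt0n n0 vp_nat // logn_ndvd. Qed.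

Lemma punit_divp n : (0 < n)%N -> logn p n = 1%N -> punit p (n%:R / p%:R).
Proof.
move=> n0 hl; have p0 : (p%:R : rat) != 0 by rewrite pnatr_eq0 -lt0n prime_gt0.
have nz : (n%:R : rat) != 0 by rewrite pnatr_eq0 -lt0n.
apply/punitP; split; first by rewrite mulf_neq0 ?invr_eq0.
by rewrite vpM ?invr_eq0 // vp_invp vp_nat // hl.
Qed.

Lemma inOloc_inO x : inO x -> inOloc p x.
Proof. by move=> h; exists 1%N; rewrite coprime1n qscale1. Qed.

Lemma inOloc_mul x y : inOloc p x -> inOloc p y -> inOloc p (qmul x y).
Proof.
move=> [n [n0 [cn hx]]] [m [m0 [cm hy]]]; exists (n * m)%N.
rewrite muln_gt0 n0 coprimeMl cn natrM -qscaleA -qmulZr -qmulZl.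
by split=> //; split=> //; apply: inO_mul.
Qed.

Lemma inOloc_conj x : inOloc p x -> inOloc p (qconj x).
Proof.
by move=> [n [n0 [cn hx]]]; exists n; rewrite -qconjZ; split=> //; split=> //; apply: inO_conj.
Qed.

Lemma inOloc_scale c x : ~~ (p %| `|denq c|)%N -> inOloc p x -> inOloc p (qscale c x).
Proof.
move=> hc [n [n0 [cn hx]]]; exists (`|denq c| * n)%N; split; [|split].
- by rewrite muln_gt0 n0 absz_gt0 gt_eqF ?denq_gt0.
- by rewrite coprimeMl cn coprime_sym prime_coprime // hc.
- have -> : qscale (`|denq c| * n)%:R (qscale c x) = qscale (numq c)%:~R (qscale n%:R x).
    rewrite !qscaleA natrM -[(`|denq c|%N)%:R]/((`|denq c|%N)%:~R : rat).
    by rewrite gez0_abs ?ltW ?denq_gt0 // numqE; congr qscale; ring.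
  exact: inO_scale.
Qed.

Lemma inO_divp x : inO x -> inOloc p (qscale p%:R^-1 x) -> inO (qscale p%:R^-1 x).
Proof.
move=> /inOP /allP hx [n [n0 [cnp /inOP]]]; rewrite inOP !hurwitz_coordsZ -map_comp.
move=> /allP hn; apply/allP => _ /mapP[w hw ->].
by apply: (Qint_div_prime pp cnp (hx w hw)); apply: (hn (_ * _)); apply/mapP; exists w.
Qed.

End Valuation.

(** * Vertices at distance at most one *)

Definition local_unit p u := inOloc p u /\ punit p (Nm u).

(* [near_base p y]: the vertex y v_{0,p} is at distance at most 1 from v_{0,p};
   [near p w w']: the vertex w' is at distance at most 1 from w. *)
Definition near_base p y := inOloc p y /\ (punit p (Nm y) \/ punit p (Nm y / p%:R)).

Definition near p w w' := exists c e, [/\ c != 0, near_base p e & w' = qscale c (qmul w e)].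

Section Tree.
Variable p : nat.
Hypothesis pp : prime p.

Lemma near_base_Nm_neq0 e : near_base p e -> Nm e != 0.
Proof.
case=> _ [/punit_neq0 // | /punit_neq0].
by apply: contraNneq => ->; rewrite mul0r.
Qed.

Lemma local_unit_conj u : local_unit p u -> local_unit p (qconj u).
Proof. by case=> hu hN; split; [apply: inOloc_conj | rewrite Nm_conj]. Qed.

Lemma near_base_conj e : near_base p e -> near_base p (qconj e).
Proof. by case=> he hN; split; [apply: inOloc_conj | rewrite Nm_conj]. Qed.

Lemma near_base_unitl u e : local_unit p u -> near_base p e -> near_base p (qmul u e).
Proof.
case=> hu hNu [he hNe]; split; first exact: inOloc_mul.
by rewrite NmM -mulrA; case: hNe => h; [left | right]; apply: punitM.
Qed.

Lemma near_base_unitr e u : near_base p e -> local_unit p u -> near_base p (qmul e u).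
Proof.
move=> [he hNe] [hu hNu]; split; first exact: inOloc_mul.
by rewrite NmM mulrAC; case: hNe => h; [left | right]; apply: punitM.
Qed.

Lemma local_unit1 : local_unit p q1.
Proof. by split; [apply: inOloc_inO inO_q1 | rewrite Nm1 punit1]. Qed.

Lemma near_refl w : near p w w.
Proof.
exists 1, q1; split => //; last by rewrite qmulq1 qscale1.
by have [? ?] := local_unit1; split=> //; left.
Qed.

Lemma adjV_near s t : adjV p s t -> near p s t /\ near p t s.
Proof.
case=> c [c0 /=]; set e := qscale c _ => -[he hN].
have nbe : near_base p e by split=> //; right.
have e0 := near_base_Nm_neq0 nbe.
have s0 : Nm s != 0.
  by apply: contraNneq e0 => s0; rewrite /e NmZ NmM Nm_inv s0 invr0 mul0r mulr0.
have ht : t = qscale c^-1 (qmul s e).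
  by rewrite /e qmulZr qscaleA mulVf // qscale1 qmulA qmulV // qmul1q.
split; first by exists c^-1, e; rewrite invr_eq0.
exists (c^-1 * Nm e)^-1, (qconj e); split; last 1 first.
- rewrite ht qmulZl -qmulA qmul_conj qmulZr qmulq1 !qscaleA -mulrA mulVf ?qscale1 //.
  by rewrite mulf_neq0 ?invr_eq0.
- by rewrite invr_eq0 mulf_neq0 ?invr_eq0.
- exact: near_base_conj.
Qed.

Lemma sameV_baseP w :
  sameV p q1 w <-> exists c u, [/\ c != 0, local_unit p u & w = qscale c u].
Proof.
split=> [[c [c0 /=]]|[c [u [c0 hu ->]]]].
  rewrite qinv1 qmul1q; exists c^-1, (qscale c w).
  by rewrite invr_eq0 qscaleA mulVf // qscale1.
by exists c^-1; rewrite invr_eq0 qinv1 qmul1q qscaleA mulVf // qscale1.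
Qed.

Lemma adjV_base_intro c y :
  c != 0 -> inOloc p y -> punit p (Nm y / p%:R) -> adjV p q1 (qscale c y).
Proof.
by move=> c0 hy hN; exists c^-1; rewrite invr_eq0 /= qinv1 qmul1q qscaleA mulVf // qscale1.
Qed.

Lemma near_base_of_near g w w' :
  sameV p q1 w -> sameV p q1 (qmul g w') -> near p w w' ->
  exists l, l != 0 /\ near_base p (qscale l g).
Proof.
move=> /sameV_baseP[k1 [u1 [k10 hu1 hw]]] /sameV_baseP[k2 [u2 [k20 hu2 hg]]].
case=> c [e [c0 he hw']]; have u10 := punit_neq0 hu1.2; have e0 := near_base_Nm_neq0 he.
have key :
    qscale (c * k1 * Nm e * Nm u1) g = qscale k2 (qmul (qmul u2 (qconj e)) (qconj u1)).
  rewrite -!qmulZl -hg hw' hw -!qmulA !qmulZl !qmulZr -(qmulA u1) (qmulA e) qmul_conj.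
  by rewrite qmulZl qmul1q !qmulZr qmul_conj !qmulZr qmulq1 !qscaleA; congr qscale; ring.
exists (k2^-1 * (c * k1 * Nm e * Nm u1)); split; first by rewrite !mulf_neq0 ?invr_eq0.
rewrite -qscaleA key qscaleA mulVf // qscale1.
by apply: near_base_unitr (local_unit_conj hu1); apply: near_base_unitl (near_base_conj he).
Qed.

End Tree.

Lemma nat_add_lt_two_thirds (R : realFieldType) (n : nat) (t : R) :
  0 <= t -> n%:R + t < 2%:R / 3%:R -> n = 0%N.
Proof.
case: n => // n t0; rewrite -natr1 => h; exfalso.
have : 2%:R / 3%:R < (1 : R) by rewrite ltr_pdivrMr ?ltr0n // mul1r ltr_nat.
have : (0 : R) <= n%:R by rewrite ler0n.
lra.
Qed.

Lemma inRp_base (R : realFieldType) p (P : tpoint R) : 0 <= pt_par P <= 1 -> inRp p P ->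
  sameV p q1 (pt_src P) \/ sameV p q1 (pt_tgt P).
Proof.
case/andP=> t0 t1 [n [m [[hn _] [[hm _] [h|h]]]]].
  by left; move: hn; rewrite (nat_add_lt_two_thirds t0 h).
have t0' : 0 <= 1 - pt_par P by rewrite subr_ge0.
by right; move: hm; rewrite (@nat_add_lt_two_thirds R m (1 - pt_par P) t0') // addrA.
Qed.

Lemma near_base_of_inRp (R : realFieldType) p g (P : tpoint R) : prime p -> onTree p P ->
  inRp p P -> inRp p (act g P) -> exists l, l != 0 /\ near_base p (qscale l g).
Proof.
move=> pp [hadj hpar] hP hgP; have [hst hts] := adjV_near hadj.
have hr := near_refl pp.
case: (inRp_base hpar hP) => hw; case: (inRp_base (P := act g P) hpar hgP) => /= hgw;
  apply: (near_base_of_near pp hw hgw); first [exact: hr | done].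
Qed.

(** * Descent to a representative of norm dividing m_S *)

Definition hurwitz_rep S g := exists x : quat, inO x /\
  (exists n : nat, Nm x = n%:R /\ (n %| mS S)%N) /\
  (exists u : rat, unitZS S u /\ g = qscale u x).

Lemma mS_gt0 S : all prime S -> (0 < mS S)%N.
Proof. by move=> pS; rewrite /mS big_seq; apply: prodn_cond_gt0 => p /(allP pS)/prime_gt0. Qed.

Lemma dvdn_mS p S : p \in S -> (p %| mS S)%N.
Proof. by move=> pS; rewrite /mS (big_rem p) ?dvdn_mulr. Qed.

Lemma logn_mS q S : prime q -> all prime S -> logn q (mS S) = count_mem q S.
Proof.
move=> pq; elim: S => [|a S IH] /=; first by rewrite /mS big_nil logn1.
case/andP=> pa pS; have -> : mS (a :: S) = (a * mS S)%N by rewrite /mS big_cons.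
rewrite lognM ?mS_gt0 ?prime_gt0 //.
by rewrite (logn_prime _ pa) IH // eq_sym.
Qed.

Lemma dvdn_mS_squarefree S N j : uniq S -> all prime S -> (0 < N)%N ->
  (N %| mS S ^ j)%N -> (forall p, p \in S -> ~~ (p ^ 2 %| N)%N) -> (N %| mS S)%N.
Proof.
move=> uS pS N0 hN hsq; have m0 := mS_gt0 pS.
suff <- : gcdn N (mS S) = N by rewrite dvdn_gcdr.
apply: eqn_from_log; rewrite ?gcdn_gt0 ?N0 // => q; rewrite logn_gcd //; apply/minn_idPl.
case: (boolP (prime q)) => pq; last by rewrite /logn (negbTE pq).
rewrite logn_mS // count_uniq_mem //; case: (boolP (q \in S)) => qS /=.
  by have := hsq q qS; rewrite pfactor_dvdn //; lia.
have mj : (0 < mS S ^ j)%N by rewrite expn_gt0 m0.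
by have := dvdn_leq_log q mj hN; rewrite lognX logn_mS // count_uniq_mem // (negbTE qS) muln0.
Qed.

Lemma unitZS_mulp S l p : all prime S -> p \in S -> unitZS S l -> unitZS S (l * p%:R).
Proof.
move=> pS pin [l0 [[k hk] [k' hk']]]; have hp := dvdn_mS pin.
have p0 : (p%:R : rat) != 0 by rewrite pnatr_eq0 -lt0n prime_gt0 ?(allP pS).
split; first by rewrite mulf_neq0.
split; first by exists k; move: hk; rewrite /isInt -!Qint_def mulrA => h; rewrite rpredM ?natr_int.
exists k'.+1; move: hk'; rewrite /isInt -!Qint_def => h.
have -> : ((mS S ^ k'.+1)%:R * (l * p%:R)^-1 : rat) = (mS S %/ p)%:R * ((mS S ^ k')%:R * l^-1).
  by rewrite natr_div ?unitfE // expnS natrM invfM; field; rewrite p0 l0.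
by rewrite rpredM ?natr_int.
Qed.

(* v_p(Nm (l x)) <= 1 < 2 <= v_p(Nm x) forces v_p(l) < 0, so x/p = (l p)^-1 (l x) is
   p-integral. *)
Lemma inO_divp_of_near_base p x l N : prime p -> inO x -> l != 0 ->
  near_base p (qscale l x) -> Nm x = N%:R -> (0 < N)%N -> (p ^ 2 %| N)%N ->
  inO (qscale p%:R^-1 x).
Proof.
move=> pp hx l0 [hy hNy] hN N0 hp2.
have p0 : (p%:R : rat) != 0 by rewrite pnatr_eq0 -lt0n prime_gt0.
have x0 : Nm x != 0 by rewrite hN pnatr_eq0 -lt0n.
have y0 := NmZ_neq0 l0 x0.
have vy : vp p (Nm (qscale l x)) <= 1.
  by case: hNy => /(punitP pp)[_]; rewrite ?vpM ?invr_eq0 ?vp_invp //; lia.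
have vx : 2 <= vp p (Nm x).
  by rewrite hN vp_nat //; move: hp2; rewrite pfactor_dvdn //; lia.
have vlx : vp p (Nm (qscale l x)) = vp p l + vp p l + vp p (Nm x).
  by rewrite NmZ expr2 !vpM ?mulf_neq0.
have vc : 0 <= vp p (l^-1 * p%:R^-1).
  by rewrite vpM ?invr_eq0 // vpV // vp_invp //; lia.
apply: inO_divp => //.
have -> : qscale p%:R^-1 x = qscale (l^-1 * p%:R^-1) (qscale l x).
  by rewrite qscaleA mulrAC mulVf ?mul1r.
apply: inOloc_scale => //; apply: vp_ge0_denq => //.
by rewrite mulf_neq0 ?invr_eq0.
Qed.

Section Descent.
Variables (S : seq nat) (g : quat).
Hypotheses (uS : uniq S) (pS : all prime S)
  (hloc : forall p, p \in S -> exists l, l != 0 /\ near_base p (qscale l g)).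

Lemma hurwitz_descent N x lam j : inO x -> Nm x = N%:R -> (0 < N)%N ->
  (N %| mS S ^ j)%N -> unitZS S lam -> g = qscale lam x -> hurwitz_rep S g.
Proof.
elim/ltn_ind: N x lam => N IH x lam hx hN N0 hNj hlam hg.
have [/hasP[p pin hp2]|/hasPn hsq] := boolP (has (fun p => p ^ 2 %| N)%N S); last first.
  exists x; split=> //; split; last by exists lam.
  by exists N; split=> //; apply: (dvdn_mS_squarefree uS pS N0 hNj).
have pp : prime p by apply: (allP pS).
have p0 : (p%:R : rat) != 0 by rewrite pnatr_eq0 -lt0n prime_gt0.
have p2 : (0 < p ^ 2)%N by rewrite expn_gt0 prime_gt0.
have [l [l0 hl]] := hloc pin; have lam0 : lam != 0 by case: hlam.
have hx' : inO (qscale p%:R^-1 x).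
  apply: (inO_divp_of_near_base pp hx (mulf_neq0 l0 lam0) _ hN N0 hp2).
  by rewrite -qscaleA -hg.
apply: (IH (N %/ p ^ 2)%N _ _ (lam * p%:R) hx').
- by rewrite ltn_Pdiv // (ltn_exp2l 0) ?prime_gt1.
- by rewrite NmZ hN natr_div ?unitfE ?natrX ?expf_neq0 // exprVn mulrC.
- by rewrite divn_gt0 // dvdn_leq.
- exact: dvdn_trans (dvdn_div hp2) hNj.
- exact: unitZS_mulp.
- by rewrite qscaleA -mulrA mulfV // mulr1.
Qed.

Lemma hurwitz_rep_of_near_base : inGammaS S g -> hurwitz_rep S g.
Proof.
move=> [g0 [[k hk] [l hl]]]; set m := mS S in hk hl.
have m0 : (0 < m)%N := mS_gt0 pS.
have mk0 : ((m ^ k)%:R : rat) != 0 by rewrite pnatr_eq0 -lt0n expn_gt0 m0.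
have gN : Nm g != 0 by apply/negP => /eqP /Nm_eq0.
have [N hN] := inO_Nm hk; have [M hM] := inO_Nm hl.
have NM : (N * M = m ^ (2 * (k + l)))%N.
  apply/eqP; rewrite -(eqr_nat rat) natrM -hN -hM NmZ NmZ Nm_inv.
  rewrite !natrX mulnDr exprD !exprM -!(exprAC _ 2); apply/eqP; field; by rewrite gN.
have N0 : (0 < N)%N by rewrite lt0n -(eqr_nat rat) -hN NmZ_neq0.
apply: (hurwitz_descent hk hN N0 (j := (2 * (k + l))%N) (lam := ((m ^ k)%:R)^-1)).
- by rewrite -NM dvdn_mulr.
- split; first by rewrite invr_eq0.
  split; first by exists k; rewrite /isInt -Qint_def mulfV // rpred1.
  by exists 0%N; rewrite /isInt -Qint_def invrK expn0 mul1r natr_int.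
- by rewrite qscaleA mulVf // qscale1.
Qed.

End Descent.

(** * Points of R_p that gamma keeps in R_p *)

Section SumTwoSquares.
Variables (p h : nat).
Hypotheses (pp : prime p) (hp : p = (h + h).+1).

Lemma sqr_ord_inj : injective (fun a : 'I_h.+1 => (val a)%:R ^+ 2 : 'F_p).
Proof.
have ltp (a : 'I_h.+1) : (a < p)%N by have := ltn_ord a; lia.
move=> a a' /= /eqP; rewrite eqf_sqr => /orP[] /eqP e; apply: val_inj => /=.
  by have := congr1 val e; rewrite /= !val_Fp_nat // !modn_small.
have e2 : ((val a + val a')%:R : 'F_p) = 0 by rewrite natrD e addNr.
have := congr1 val e2; rewrite /= val_Fp_nat // modn_small; last first.
  by have := ltn_ord a'; have := ltn_ord a; lia.
by move/eqP; rewrite addn_eq0 => /andP[/eqP-> /eqP->].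
Qed.

Lemma prime_dvd_sqr_add_sqr_add1 :
  exists a b : nat, [/\ (a <= h)%N, (b <= h)%N & (p %| a ^ 2 + b ^ 2 + 1)%N].
Proof.
set A := [set ((val a)%:R ^+ 2 : 'F_p) | a : 'I_h.+1].
set B := [set (-1 - (val b)%:R ^+ 2 : 'F_p) | b : 'I_h.+1].
have cA : #|A| = h.+1 by rewrite card_imset ?card_ord //; apply: sqr_ord_inj.
have cB : #|B| = h.+1.
  by rewrite card_imset ?card_ord // => b b' /= /addrI /oppr_inj /sqr_ord_inj.
have /set0Pn[r /setIP[/imsetP[a _ ->] /imsetP[b _ e]]] : A :&: B != set0.
  apply/eqP => AB0; have := cardsU A B; rewrite AB0 cards0 cA cB subn0 => cAB.
  by have := max_card (mem (A :|: B)); rewrite card_Fp // cAB; move: hp; lia.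
exists a, b; split; try by rewrite -ltnS.
by rewrite (dvdn_pcharf (pchar_Fp pp)) !natrD !natrX; apply/eqP; rewrite e; ring.
Qed.

End SumTwoSquares.

Lemma logn_eq1_lt_sqr p k : prime p -> (0 < k)%N -> (p %| k)%N -> (k < p ^ 2)%N ->
  logn p k = 1%N.
Proof.
move=> pp k0 hpk hk; have := logn_dvd_gt0 pp k0 hpk.
have : ~~ (p ^ 2 %| k)%N by apply: contraL hk => /(dvdn_leq k0); rewrite -leqNgt.
rewrite pfactor_dvdn //; lia.
Qed.

Section Neighbours.
Variable p : nat.
Hypothesis pp : prime p.

Lemma adjV_Nm_neq0 s t : adjV p s t -> Nm t != 0.
Proof.
case=> c [_ /= [_ /punit_neq0]]; apply: contraNneq => t0.
by rewrite NmZ NmM t0 !mulr0 mul0r.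
Qed.

Lemma sameV_refl w : Nm w != 0 -> sameV p w w.
Proof.
move=> w0; exists 1; split=> //=; rewrite qscale1 qinvK // Nm1.
exact: local_unit1.
Qed.

Lemma adjV_base_not_sameV w : adjV p q1 w -> ~ sameV p q1 w.
Proof.
case=> c [c0 /= [_]]; rewrite qinv1 qmul1q => hN /sameV_baseP[k [u [k0 [_ hu] hw]]].
move: hN; rewrite hw qscaleA NmZ => /(punitP pp)[_]; move/(punitP pp): hu => [u0 vu].
have p0 : (p%:R : rat) != 0 by rewrite pnatr_eq0 -lt0n prime_gt0.
by rewrite !vpM ?mulf_neq0 ?expf_neq0 ?invr_eq0 // vu vp_invp //; lia.
Qed.

Lemma distV_base w : sameV p q1 w -> distV p w 0.
Proof. by split. Qed.

Lemma distV_adj w : adjV p q1 w -> distV p w 1.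
Proof.
move=> hw; split; first by exists w; split=> //; apply/sameV_refl/(adjV_Nm_neq0 hw).
by case=> // _; apply: adjV_base_not_sameV.
Qed.

End Neighbours.

Section LocalPoint.
Variables (R : realFieldType) (p n : nat) (x : quat) (u : rat).
Hypotheses (pp : prime p) (hx : inO x) (hN : Nm x = n%:R) (n0 : (0 < n)%N) (u0 : u != 0).

Lemma local_point_ramified : logn p n = 1%N ->
  exists P : tpoint R, [/\ onTree p P, inRp p P & inRp p (act (qscale u x) P)].
Proof.
move=> hl; have hpn := punit_divp pp n0 hl.
have hadj : adjV p q1 (qconj x).
  rewrite -[qconj x]qscale1; apply: adjV_base_intro; rewrite ?Nm_conj ?hN //.
  exact/inOloc_conj/inOloc_inO.
have h1 : sameV p q1 q1 by apply: (sameV_refl pp); rewrite Nm1.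
exists (TPoint q1 (qconj x) 2^-1); split.
- by split=> //=; apply/andP; split; lra.
- exists 0%N, 1%N; split; [exact: distV_base h1 | split; [exact: distV_adj|]].
  by left => /=; rewrite mulr0n; lra.
rewrite /act /= qmulq1 qmulZl qmul_conj hN qscaleA; exists 1%N, 0%N; split; [|split].
- apply: distV_adj => //; apply: adjV_base_intro; rewrite ?hN //; exact: inOloc_inO.
- apply/distV_base/sameV_baseP; exists (u * n%:R), q1.
  by split; [rewrite mulf_neq0 // pnatr_eq0 -lt0n | apply: local_unit1 |].
- by right => /=; rewrite mulr0n; lra.
Qed.

(* Every point lies on an edge, so even though gamma fixes v_{0,p} we need a neighbour
   of v_{0,p}: the Hurwitz quaternion a + bI + J with p dividing a^2 + b^2 + 1 exactly once. *)
Lemma local_point_unramified : odd p -> ~~ (p %| n)%N ->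
  exists P : tpoint R, [/\ onTree p P, inRp p P & inRp p (act (qscale u x) P)].
Proof.
move=> op hpn; have hun := punit_nat pp n0 hpn.
have [h hp] : exists h, p = (h + h).+1.
  by exists p./2; have := odd_double_half p; rewrite op -addnn.
have [a [b [ha hb hk]]] := prime_dvd_sqr_add_sqr_add1 pp hp.
pose z := Quat a%:R b%:R 1 0.
have hz : inO z by exists a, b, 1, 0; rewrite /z; f_equal; field.
have hNz : Nm z = (a ^ 2 + b ^ 2 + 1)%:R by rewrite /Nm /= !natrD !natrX; ring.
have k0 : (0 < a ^ 2 + b ^ 2 + 1)%N by rewrite addn1.
have hzl : logn p (a ^ 2 + b ^ 2 + 1) = 1%N.
  by apply: logn_eq1_lt_sqr => //; rewrite hp -!mulnn; nia.
have hpz := punit_divp pp k0 hzl.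
have hadj : adjV p q1 z.
  by rewrite -[z]qscale1; apply: adjV_base_intro; rewrite ?hNz //; apply: inOloc_inO.
exists (TPoint q1 z 0); split.
- by split=> //=; apply/andP; split; lra.
- exists 0%N, 1%N; split; [|split; [exact: distV_adj | by left => /=; rewrite mulr0n; lra]].
  by apply/distV_base/(sameV_refl pp); rewrite Nm1.
rewrite /act /= qmulq1 qmulZl; exists 0%N, 1%N; split; [|split].
- apply/distV_base/sameV_baseP; exists u, x.
  by split=> //; split; rewrite ?hN //; apply: inOloc_inO.
- apply: distV_adj => //; apply: adjV_base_intro => //.
    by apply: inOloc_mul; apply: inOloc_inO.
  by rewrite NmM hN hNz -mulrA; apply: punitM.
- by left => /=; rewrite mulr0n; lra.
Qed.

End LocalPoint.

Lemma choice_on_seq (T : Type) (t0 : T) (S : seq nat) (F : nat -> T -> Prop) :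
  (forall p, p \in S -> exists y, F p y) -> exists f : nat -> T, forall p, p \in S -> F p (f p).
Proof.
elim: S => [|a S IH] hF; first by exists (fun=> t0).
have [ya hya] := hF a (mem_head _ _).
have [p pS|f hf] := IH; first by apply: hF; rewrite inE pS orbT.
exists (fun q => if q == a then ya else f q) => p; rewrite inE.
by case: eqP => [->|_] //= /hf.
Qed.

Lemma logn_dvdn_mS p S n : uniq S -> all prime S -> p \in S -> (n %| mS S)%N ->
  (logn p n <= 1)%N.
Proof.
move=> uS pS pin hn; have pp : prime p by apply: (allP pS).
by have := dvdn_leq_log p (mS_gt0 pS) hn; rewrite logn_mS // count_uniq_mem // pin.
Qed.

Theorem mainTheorem6 (R : realFieldType) (S : seq nat) (g : quat) :
  uniq S -> all (fun p => prime p && odd p) S -> inGammaS S g ->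
  ((exists P : nat -> tpoint R, forall p : nat, p \in S ->
       [/\ onTree p (P p), inRp p (P p) & inRp p (act g (P p))])
   <->
   (exists x : quat, inO x /\
      (exists n : nat, Nm x = n%:R /\ (n %| mS S)%N) /\
      (exists u : rat, unitZS S u /\ g = qscale u x))).
Proof.
move=> uS hS hG; have pS : all prime S by apply: sub_all hS => p /andP[].
split=> [[P hP]|[x [hx [[n [hN hn]] [u [[u0 _] ->]]]]]].
  apply: hurwitz_rep_of_near_base => // p pin.
  by have [] := hP p pin; apply: near_base_of_inRp; apply: (allP pS).
pose F p (Q : tpoint R) := [/\ onTree p Q, inRp p Q & inRp p (act (qscale u x) Q)].
apply: (@choice_on_seq _ (TPoint q1 q1 0) S F) => p pin; have /andP[pp op] := allP hS p pin.
have n0 : (0 < n)%N by rewrite lt0n; apply: contraTneq hn => ->; rewrite dvd0n -lt0n mS_gt0.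
have [hpn|hpn] := boolP (p %| n)%N.
  apply: (local_point_ramified R pp hx hN n0 u0); have := logn_dvd_gt0 pp n0 hpn.
  by have := logn_dvdn_mS uS pS pin hn; lia.
exact: (local_point_unramified R pp hx hN n0 u0 op hpn).
Qed.
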